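(* Let $a,b,c,d,e,f,k,l,p,q,r,s\ge0$ be integers with $a+b$, $c+d$, $e+f$, $k+l$, $p+q$, $r+s$ positive, and let $$E=\begin{bmatrix} J_{k,a}&-J_{k,b}&J_{k,c}&-J_{k,d}&0&0\\ -J_{l,a}&J_{l,b}&-J_{l,c}&J_{l,d}&0&0\\ J_{p,a}&-J_{p,b}&0&0&J_{p,e}&-J_{p,f}\\ -J_{q,a}&J_{q,b}&0&0&-J_{q,e}&J_{q,f}\\ 0&0&J_{r,c}&-J_{r,d}&-J_{r,e}&J_{r,f}\\ 0&0&-J_{s,c}&J_{s,d}&J_{s,e}&-J_{s,f} \end{bmatrix}$$ with $E\mathbf 1=0$ and $\mathbf 1^TE=0^T$. Then $E$ is realizable if and only if one of the following holds: (i) $a+b$, $c+d$, $e+f$, $k+l$, $p+q$ and $r+s$ are all even; (ii) either $a+b$, $c+d$, $e+f$ are all odd or $k+l$, $p+q$, $r+s$ are all odd, and $\frac{e+f}{k+l}=\frac{c+d}{p+q}=\frac{a+b}{r+s}$.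
   Context: $J_{p,q}$ is the $p\times q$ all-ones matrix. Two $(0,1)$ matrices $A,B$ are Gram mates if $AA^T=BB^T$, $A^TA=B^TB$ and $A\neq B$. A $(0,1,-1)$ matrix $E$ with $E\mathbf 1=0$, $\mathbf 1^TE=0^T$ is realizable if there is a $(0,1)$ matrix $A$ such that $A$ and $A+E$ are Gram mates. *)

From mathcomp Require Import all_boot all_order all_algebra.
Set Implicit Arguments. Unset Strict Implicit. Unset Printing Implicit Defensive.
Import Order.TTheory GRing.Theory Num.Theory.
Local Open Scope ring_scope.

Definition is01 (m n : nat) (A : 'M[int]_(m, n)) : Prop :=
  forall i j, A i j = 0 \/ A i j = 1.

Definition gram_mates (m n : nat) (A B : 'M[int]_(m, n)) : Prop :=
  [/\ is01 A, is01 B, A *m A^T = B *m B^T, A^T *m A = B^T *m B & A <> B].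

Definition realizable (m n : nat) (E : 'M[int]_(m, n)) : Prop :=
  exists A : 'M[int]_(m, n), gram_mates A (A + E).

Definition blk (x0 x1 x2 x3 x4 x5 i : nat) : nat :=
  if (i < x0)%N then 0%N
  else if (i < x0 + x1)%N then 1%N
  else if (i < x0 + x1 + x2)%N then 2%N
  else if (i < x0 + x1 + x2 + x3)%N then 3%N
  else if (i < x0 + x1 + x2 + x3 + x4)%N then 4%N
  else 5%N.

Definition sgn_tab (rb cb : nat) : int :=
  match rb, cb with
  | 0, 0 => 1 | 0, 1 => -1 | 0, 2 => 1 | 0, 3 => -1 | 0, _ => 0
  | 1, 0 => -1 | 1, 1 => 1 | 1, 2 => -1 | 1, 3 => 1 | 1, _ => 0
  | 2, 0 => 1 | 2, 1 => -1 | 2, 4 => 1 | 2, 5 => -1 | 2, _ => 0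
  | 3, 0 => -1 | 3, 1 => 1 | 3, 4 => -1 | 3, 5 => 1 | 3, _ => 0
  | 4, 2 => 1 | 4, 3 => -1 | 4, 4 => -1 | 4, 5 => 1 | 4, _ => 0
  | _, 2 => -1 | _, 3 => 1 | _, 4 => 1 | _, 5 => -1 | _, _ => 0
  end.

Definition Emx (a b c d e f k l p q r s : nat) :
  'M[int]_(k + l + p + q + r + s, a + b + c + d + e + f) :=
  \matrix_(i, j) sgn_tab (blk k l p q r s i) (blk a b c d e f j).

Set Warnings "-notation-overridden,-ambiguous-paths".
From mathcomp Require Import all_boot all_order all_algebra.
From mathcomp Require Import zify ring.
Import Order.TTheory GRing.Theory Num.Theory.
Local Open Scope ring_scope.

(* If A and A + E are (0,1), then A is forced off the zero blocks of E: A = 1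
   where E = -1 and A = 0 where E = 1.  In the zero blocks record A through the
   twisted matrix W (W = A where the row and column blocks have indices of the same
   parity, W = 1 - A otherwise) and let w_i be the number of ones of W in row i.
   Expanding (A + E)(A + E)^T - AA^T block by block and using the relations between
   block sizes imposed by the zero line sums, the row Gram condition says exactly
   that the balance +-(2 w_i - z_i) is the same number alpha for all rows, where z_i
   is the width of the zero block of row i and the sign is - for the middle row
   group; the column condition gives a constant beta in the same way.  Counting the
   ones of W in each zero block by rows and by columns yields
   (k + l) alpha = (e + f) beta, (p + q) alpha = (c + d) beta,
   (r + s) alpha = (a + b) beta, where alpha = e + f and beta = r + s modulo 2, and
   the parity and ratio conditions follow.  Conversely, circulant patterns in the zero
   blocks realize them: one 1 in every 2 consecutive positions in the even case,
   and (G +- 1)/2 ones in every G positions, G the gcd of the two sides of the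
   block, in the odd case. *)

Definition sum6 (G : nat -> int) : int :=
  G 0%N + G 1%N + G 2%N + G 3%N + G 4%N + G 5%N.

Lemma eq_sum6 (G H : nat -> int) :
  (forall c, (c < 6)%N -> G c = H c) -> sum6 G = sum6 H.
Proof. by move=> eGH; rewrite /sum6 !eGH. Qed.

Lemma sgn_tabC r c : (r < 6)%N -> (c < 6)%N -> sgn_tab r c = sgn_tab c r.
Proof. by case: r => [|[|[|[|[|[|r]]]]]] //; case: c => [|[|[|[|[|[|c]]]]]]. Qed.

Lemma sgn_tab_vals r c : [\/ sgn_tab r c = 0, sgn_tab r c = 1 | sgn_tab r c = -1].
Proof.
case: r => [|[|[|[|[|[|r]]]]]]; case: c => [|[|[|[|[|[|c]]]]]];
  by [apply: Or31 | apply: Or32 | apply: Or33].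
Qed.

Lemma sgn_tab_eq0 r c : (r < 6)%N -> (c < 6)%N ->
  (sgn_tab r c == 0) = (c./2 == 2 - r./2)%N.
Proof. by case: r => [|[|[|[|[|[|r]]]]]] //; case: c => [|[|[|[|[|[|c]]]]]]. Qed.

Lemma sum_ord_nat (n lo hi : nat) (F : nat -> int) : (hi <= n)%N ->
  \sum_(j < n | (lo <= j < hi)%N) F j = \sum_(lo <= j < hi) F j.
Proof.
move=> hn; rewrite [RHS]big_nat_cond (big_nat_widenl _ 0) // (big_nat_widen _ _ _ _ _ hn).
by rewrite big_mkord; apply: eq_bigl => j /=; case: (lo <= j)%N; case: (j < hi)%N.
Qed.

Lemma sum_indicator_lt (n m : nat) :
  \sum_(0 <= j < n) (if (j < m)%N then 1 else 0 : int) = (minn m n)%:Z.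
Proof.
elim: n => [|n IHn]; first by rewrite big_geq //; lia.
by rewrite big_nat_recr //= IHn; case: ifP => ?; lia.
Qed.

Lemma sum_indicator_lt_shift (n m s : nat) : (0 < n)%N -> (m <= n)%N ->
  \sum_(0 <= j < n) (if ((s + j) %% n < m)%N then 1 else 0 : int) = m%:Z.
Proof.
move=> n_gt0 le_mn; rewrite big_mkord.
pose h (j : 'I_n) := Ordinal (ltn_pmod (s + j) n_gt0).
have h_inj : injective h.
  move=> j1 j2 [] /eqP; rewrite eqn_modDl !modn_small // => /eqP e12.
  exact: val_inj.
pose F (k : 'I_n) : int := if (k < m)%N then 1 else 0.
rewrite (eq_bigr (fun j => F (h j))) // -(reindex_inj h_inj (P := xpredT)) /F /=.
by rewrite -(big_mkord xpredT (fun j => if (j < m)%N then 1 else 0)) sum_indicator_lt; lia.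
Qed.

Lemma sum_indicator_lt_periodic (n m s q : nat) : (0 < n)%N -> (m <= n)%N ->
  \sum_(0 <= j < q * n) (if ((s + j) %% n < m)%N then 1 else 0 : int) = (q * m)%:Z.
Proof.
move=> n_gt0 le_mn; elim: q => [|q IHq]; first by rewrite mul0n big_geq.
rewrite (big_cat_nat _ (n := (q * n)%N)) //= ?IHq; last by rewrite mulSn; lia.
rewrite -{1}(add0n (q * n)%N) big_addn.
have -> : (q.+1 * n - q * n = n)%N by rewrite mulSn; lia.
under eq_bigr => j _ do rewrite addnA [(_ + (q * n)%N)%N]addnC modnMDl.
by rewrite sum_indicator_lt_shift // mulSn PoszD addrC.
Qed.

Section Blocks.
Variables y0 y1 y2 y3 y4 y5 : nat.
Local Notation Y := (y0 + y1 + y2 + y3 + y4 + y5)%N.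
Local Notation bk := (blk y0 y1 y2 y3 y4 y5).

Definition bsize (c : nat) : nat :=
  match c with 0 => y0 | 1 => y1 | 2 => y2 | 3 => y3 | 4 => y4 | _ => y5 end.

Definition grp_start (g : nat) : nat :=
  match g with 0 => 0 | 1 => y0 + y1 | _ => y0 + y1 + y2 + y3 end.

Definition grp_size (g : nat) : nat :=
  match g with 0 => y0 + y1 | 1 => y2 + y3 | _ => y4 + y5 end.

Definition balanced_sizes : Prop :=
  y0%:Z - y1%:Z + y2%:Z - y3%:Z = 0 /\ y0%:Z - y1%:Z + y4%:Z - y5%:Z = 0.

Lemma blk_lt6 (j : 'I_Y) : (bk j < 6)%N.
Proof. by rewrite /blk; repeat case: ifP. Qed.

Lemma blk_half_lt3 (j : 'I_Y) : ((bk j)./2 < 3)%N.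
Proof. by have := blk_lt6 j; case: (bk j) => [|[|[|[|[|[|]]]]]]. Qed.

Lemma sum_nat_blk_const (G : nat -> int) c lo hi :
  (forall j, (lo <= j < hi)%N -> bk j = c) ->
  \sum_(lo <= j < hi) G (bk j) = (hi - lo)%:Z * G c.
Proof.
move=> bk_c; rewrite (eq_big_nat _ _ (F2 := fun=> G c)); last by move=> j /bk_c ->.
by rewrite sumr_const_nat -mulr_natl natz.
Qed.

Local Ltac blk_range := move=> ? /andP[? ?]; rewrite /blk; repeat case: ifP => ?; lia.

Lemma sum_blk (G : nat -> int) :
  \sum_(j < Y) G (bk j) = sum6 (fun c => (bsize c)%:Z * G c).
Proof.
rewrite -(big_mkord xpredT (fun j => G (bk j))).
rewrite (big_cat_nat _ (n := y0)) //; last by lia.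
rewrite (big_cat_nat _ (m := y0) (n := (y0 + y1)%N)) //; try lia.
rewrite (big_cat_nat _ (m := (y0 + y1)%N) (n := (y0 + y1 + y2)%N)) //; try lia.
rewrite (big_cat_nat _ (m := (y0 + y1 + y2)%N) (n := (y0 + y1 + y2 + y3)%N)) //; try lia.
rewrite (big_cat_nat _ (m := (y0 + y1 + y2 + y3)%N) (n := (y0 + y1 + y2 + y3 + y4)%N)) //;
  try lia.
rewrite (sum_nat_blk_const G 0%N); last by blk_range.
rewrite (sum_nat_blk_const G 1%N); last by blk_range.
rewrite (sum_nat_blk_const G 2%N); last by blk_range.
rewrite (sum_nat_blk_const G 3%N); last by blk_range.
rewrite (sum_nat_blk_const G 4%N); last by blk_range.
rewrite (sum_nat_blk_const G 5%N); last by blk_range.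
rewrite /sum6 /= !addrA; congr (_ * _ + _ * _ + _ * _ + _ * _ + _ * _ + _ * _); lia.
Qed.

Lemma sum_split_blk (F : 'I_Y -> int) :
  \sum_j F j = sum6 (fun c => \sum_(j : 'I_Y | bk j == c) F j).
Proof.
rewrite /sum6; do 6 rewrite (big_mkcond (fun j : 'I_Y => bk j == _)).
rewrite -!big_split; apply: eq_bigr => j _ /=; have := blk_lt6 j.
by case: (bk j) => [|[|[|[|[|[|]]]]]] //= _; rewrite ?addr0 ?add0r.
Qed.

Lemma sum_blk_card c : (c < 6)%N -> \sum_(j < Y | bk j == c) (1 : int) = (bsize c)%:Z.
Proof.
move=> c_lt6; rewrite big_mkcond (sum_blk (fun b => if b == c then 1 else 0)) /sum6.
by case: c c_lt6 => [|[|[|[|[|[|]]]]]] //= _; rewrite ?mulr0 ?mulr1 ?addr0 ?add0r.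
Qed.

Lemma sum_grp_const g (k : int) : (g < 3)%N ->
  \sum_(j < Y | (bk j)./2 == g) k = (grp_size g)%:Z * k.
Proof.
move=> g_lt3; rewrite big_mkcond (sum_blk (fun b => if b./2 == g then k else 0)) /sum6.
by case: g g_lt3 => [|[|[|]]] //= _; rewrite ?mulr0 ?addr0 ?add0r PoszD mulrDl ?addrA.
Qed.

Lemma grp_blkE g (j : nat) : (g < 3)%N -> (j < Y)%N ->
  ((bk j)./2 == g) = (grp_start g <= j < grp_start g + grp_size g)%N.
Proof. by case: g => [|[|[|]]] //= _ ?; rewrite /blk; repeat case: ifP; lia. Qed.

Lemma grp_end_le g : (g < 3)%N -> (grp_start g + grp_size g <= Y)%N.
Proof. by case: g => [|[|[|]]] //= _; lia. Qed.

Lemma exists_in_grp g : (g < 3)%N -> (0 < grp_size g)%N -> exists j : 'I_Y, (bk j)./2 == g.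
Proof.
move=> g_lt3 g_nonempty.
have lt_start : (grp_start g < Y)%N by have := grp_end_le _ g_lt3; lia.
by exists (Ordinal lt_start); rewrite grp_blkE //=; lia.
Qed.

Lemma sum_grp_periodic g (n m s : nat) : (g < 3)%N -> (0 < n)%N -> (m <= n)%N ->
  (n %| grp_size g)%N ->
  \sum_(j < Y | (bk j)./2 == g) (if ((s + (j - grp_start g)) %% n < m)%N then 1 else 0 : int)
  = (grp_size g %/ n * m)%:Z.
Proof.
move=> g_lt3 n_gt0 le_mn n_dvd.
pose F j : int := if ((s + j) %% n < m)%N then 1 else 0.
rewrite (eq_bigr (fun j : 'I_Y => F (j - grp_start g)%N)) //.
rewrite (eq_bigl (fun j : 'I_Y => grp_start g <= j < grp_start g + grp_size g)%N);
  last by move=> j; rewrite grp_blkE.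
rewrite (@sum_ord_nat _ _ _ (fun j => F (j - grp_start g)%N)) ?grp_end_le //.
rewrite -{1}(add0n (grp_start g)) big_addn.
under eq_bigr => j _ do rewrite addnK.
have -> : (grp_start g + grp_size g - grp_start g = grp_size g %/ n * n)%N.
  by rewrite divnK //; lia.
exact: sum_indicator_lt_periodic.
Qed.

Definition forced_count (r : nat) (n : nat -> int) (c : nat) : int :=
  if sgn_tab r c == 1 then 0 else if sgn_tab r c == -1 then (bsize c)%:Z else n c.

(* The (i, i') entry of (A + E)(A + E)^T - AA^T, for rows i, i' in blocks r, r' on
   which A has block counts n, n'. *)
Definition gram_defect (r r' : nat) (n n' : nat -> int) : int :=
  sum6 (fun c => sgn_tab r' c * n c + sgn_tab r c * n' c
                 + sgn_tab r c * sgn_tab r' c * (bsize c)%:Z).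

Definition weight_of_counts (r : nat) (n : nat -> int) : int :=
  sum6 (fun c => if sgn_tab r c == 0 then
                   (if odd r == odd c then n c else (bsize c)%:Z - n c) else 0).

Definition grp_sign (g : nat) : int := if g == 1%N then -1 else 1.

Definition balance (r : nat) (w : int) : int :=
  grp_sign r./2 * (2 * w - (grp_size (2 - r./2))%:Z).

Lemma gram_defect_eq0 r r' n n' : (r < 6)%N -> (r' < 6)%N -> balanced_sizes ->
  gram_defect r r' (forced_count r n) (forced_count r' n') = 0 <->
  r./2 = r'./2 \/ balance r (weight_of_counts r n) = balance r' (weight_of_counts r' n').
Proof.
move=> + + [l1 l2].
case: r => [|[|[|[|[|[|r]]]]]] // _; case: r' => [|[|[|[|[|[|r']]]]]] // _;
  rewrite /gram_defect /forced_count /weight_of_counts /balance /grp_sign /=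
    ?subSS ?subn0 /sum6 /=; lia.
Qed.

Lemma grp_signC g : (g < 3)%N -> grp_sign (2 - g) = grp_sign g.
Proof. by case: g => [|[|[|]]]. Qed.

Lemma balance_double_weight r w a : balance r w = a ->
  2 * w = grp_sign r./2 * a + (grp_size (2 - r./2))%:Z.
Proof. by move <-; rewrite /balance /grp_sign; case: ifP => _; ring. Qed.

End Blocks.

Arguments blk_lt6 {y0 y1 y2 y3 y4 y5}.
Arguments blk_half_lt3 {y0 y1 y2 y3 y4 y5}.
Arguments sum_blk_card {y0 y1 y2 y3 y4 y5 c}.
Arguments exists_in_grp {y0 y1 y2 y3 y4 y5} g.
Arguments balance_double_weight {y0 y1 y2 y3 y4 y5 r w a}.

Section Gram.
Variables x0 x1 x2 x3 x4 x5 y0 y1 y2 y3 y4 y5 : nat.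
Local Notation X := (x0 + x1 + x2 + x3 + x4 + x5)%N.
Local Notation Y := (y0 + y1 + y2 + y3 + y4 + y5)%N.
Local Notation rk := (blk x0 x1 x2 x3 x4 x5).
Local Notation ck := (blk y0 y1 y2 y3 y4 y5).
Local Notation E := (Emx y0 y1 y2 y3 y4 y5 x0 x1 x2 x3 x4 x5).
Local Notation sgn i j := (sgn_tab (rk i) (ck j)).
Local Notation fcount := (forced_count y0 y1 y2 y3 y4 y5).
Local Notation bal := (balance y0 y1 y2 y3 y4 y5).

Definition forced (A : 'M[int]_(X, Y)) : Prop :=
  forall (i : 'I_X) (j : 'I_Y), sgn i j != 0 -> A i j = if sgn i j == -1 then 1 else 0.

Definition blk_count (A : 'M[int]_(X, Y)) (i : 'I_X) (c : nat) : int :=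
  \sum_(j : 'I_Y | ck j == c) A i j.

Definition twisted (A : 'M[int]_(X, Y)) (i : 'I_X) (j : 'I_Y) : int :=
  if odd (rk i) == odd (ck j) then A i j else 1 - A i j.

Definition row_weight (A : 'M[int]_(X, Y)) (i : 'I_X) : int :=
  \sum_(j : 'I_Y | sgn i j == 0) twisted A i j.

Lemma forced_of_01 (A : 'M[int]_(X, Y)) : is01 A -> is01 (A + E) -> forced A.
Proof.
move=> A01 AE01 i j sgn_ij; have := A01 i j; have := AE01 i j; rewrite !mxE.
by move: sgn_ij; case: (sgn_tab_vals (rk i) (ck j)) => -> //= _; lia.
Qed.

Lemma blk_count_forced (A : 'M[int]_(X, Y)) (i : 'I_X) c : forced A -> (c < 6)%N ->
  fcount (rk i) (blk_count A i) c = blk_count A i c.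
Proof.
move=> A_forced c_lt6; rewrite /forced_count; case: ifP => [/eqP sgn1|_].
  by rewrite /blk_count big1 // => j /eqP ck_j; rewrite A_forced ck_j sgn1.
case: ifP => [/eqP sgnN1|//].
rewrite /blk_count -(sum_blk_card c_lt6); apply: eq_bigr => j /eqP ck_j.
by rewrite A_forced ck_j sgnN1.
Qed.

Lemma gram_diff_entry (A : 'M[int]_(X, Y)) (i i' : 'I_X) : forced A ->
  ((A + E) *m (A + E)^T) i i' - (A *m A^T) i i' =
  gram_defect y0 y1 y2 y3 y4 y5 (rk i) (rk i')
    (fcount (rk i) (blk_count A i)) (fcount (rk i') (blk_count A i')).
Proof.
move=> A_forced; rewrite !mxE -sumrB sum_split_blk /gram_defect.
apply: eq_sum6 => c c_lt6; rewrite !blk_count_forced //.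
rewrite (eq_bigr (fun j => sgn_tab (rk i') c * A i j + sgn_tab (rk i) c * A i' j
                   + sgn_tab (rk i) c * sgn_tab (rk i') c * 1)); last first.
  by move=> j /eqP ck_j; rewrite !mxE ck_j; ring.
by rewrite !big_split /= -!mulr_sumr sum_blk_card.
Qed.

Lemma row_weightE (A : 'M[int]_(X, Y)) (i : 'I_X) :
  row_weight A i = weight_of_counts y0 y1 y2 y3 y4 y5 (rk i) (blk_count A i).
Proof.
rewrite /row_weight big_mkcond sum_split_blk /weight_of_counts.
apply: eq_sum6 => c c_lt6.
under eq_bigr => j /eqP ck_j do rewrite /twisted ck_j.
case: ifP => _; last by rewrite big1.
by case: ifP => _ //; rewrite sumrB sum_blk_card.
Qed.

Lemma row_gram_balanced (A : 'M[int]_(X, Y)) : forced A -> balanced_sizes y0 y1 y2 y3 y4 y5 ->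
  (forall g, (g < 3)%N -> (0 < grp_size x0 x1 x2 x3 x4 x5 g)%N) ->
  (A + E) *m (A + E)^T = A *m A^T <->
  exists a, forall i : 'I_X, bal (rk i) (row_weight A i) = a.
Proof.
move=> A_forced y_bal x_nonempty.
have gram_ii' (i i' : 'I_X) : ((A + E) *m (A + E)^T) i i' = (A *m A^T) i i' <->
    (rk i)./2 = (rk i')./2 \/ bal (rk i) (row_weight A i) = bal (rk i') (row_weight A i').
  rewrite !row_weightE -gram_defect_eq0 ?blk_lt6 // -gram_diff_entry //.
  by split=> [->|/eqP]; [rewrite subrr | rewrite subr_eq0 => /eqP].
split=> [gram | [a bal_a]]; last first.
  by apply/matrixP => i i'; apply/gram_ii'; right; rewrite !bal_a.
have [i0 /eqP grp_i0] := exists_in_grp 0%N isT (x_nonempty 0%N isT).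
have [i1 /eqP grp_i1] := exists_in_grp 1%N isT (x_nonempty 1%N isT).
have bal_eq (i i' : 'I_X) : (rk i)./2 != (rk i')./2 ->
    bal (rk i) (row_weight A i) = bal (rk i') (row_weight A i').
  by move=> /eqP grp_neq; case: ((gram_ii' i i').1 (congr1 (fun M : 'M[int]_X => M i i') gram)).
exists (bal (rk i1) (row_weight A i1)) => i.
have [grp_i|grp_i] := eqVneq (rk i)./2 1%N; last by rewrite (bal_eq i i1) ?grp_i1.
by rewrite (bal_eq i i0) ?(bal_eq i0 i1) ?grp_i ?grp_i0 ?grp_i1.
Qed.

Lemma sum_grp_row_weight (A : 'M[int]_(X, Y)) a g : (g < 3)%N ->
  (forall i : 'I_X, bal (rk i) (row_weight A i) = a) ->
  2 * \sum_(i : 'I_X | (rk i)./2 == g) row_weight A i =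
  (grp_size x0 x1 x2 x3 x4 x5 g)%:Z * (grp_sign g * a + (grp_size y0 y1 y2 y3 y4 y5 (2 - g))%:Z).
Proof.
move=> g_lt3 bal_a; rewrite mulr_sumr -sum_grp_const //.
by apply: eq_bigr => i /eqP grp_i; rewrite (balance_double_weight (bal_a i)) grp_i.
Qed.

Lemma balanced_sizes_of_row_sums : E *m (const_mx 1 : 'cV[int]_Y) = 0 ->
  (forall g, (g < 3)%N -> (0 < grp_size x0 x1 x2 x3 x4 x5 g)%N) ->
  balanced_sizes y0 y1 y2 y3 y4 y5.
Proof.
move=> row_sums x_nonempty.
have row_eq (i : 'I_X) : sum6 (fun c => (bsize y0 y1 y2 y3 y4 y5 c)%:Z * sgn_tab (rk i) c) = 0.
  have := congr1 (fun M : 'cV[int]_X => M i ord0) row_sums; rewrite !mxE.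
  rewrite (eq_bigr (fun j : 'I_Y => sgn_tab (rk i) (ck j))); last first.
    by move=> j _; rewrite !mxE mulr1.
  by rewrite sum_blk.
have [i0 /eqP grp_i0] := exists_in_grp 0%N isT (x_nonempty 0%N isT).
have [i1 /eqP grp_i1] := exists_in_grp 1%N isT (x_nonempty 1%N isT).
move: (row_eq i0) (row_eq i1) (blk_lt6 i0) (blk_lt6 i1) grp_i0 grp_i1.
case: (rk i0) => [|[|[|[|[|[|?]]]]]]; case: (rk i1) => [|[|[|[|[|[|?]]]]]] //=;
  rewrite /sum6 /balanced_sizes /=; lia.
Qed.

End Gram.

Arguments forced_of_01 {x0 x1 x2 x3 x4 x5 y0 y1 y2 y3 y4 y5 A}.
Arguments row_gram_balanced {x0 x1 x2 x3 x4 x5 y0 y1 y2 y3 y4 y5 A}.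

Arguments sum_grp_row_weight {x0 x1 x2 x3 x4 x5 y0 y1 y2 y3 y4 y5 A a g}.

Section Transpose.
Variables x0 x1 x2 x3 x4 x5 y0 y1 y2 y3 y4 y5 : nat.
Local Notation X := (x0 + x1 + x2 + x3 + x4 + x5)%N.
Local Notation Y := (y0 + y1 + y2 + y3 + y4 + y5)%N.
Local Notation rk := (blk x0 x1 x2 x3 x4 x5).
Local Notation ck := (blk y0 y1 y2 y3 y4 y5).
Local Notation E := (Emx y0 y1 y2 y3 y4 y5 x0 x1 x2 x3 x4 x5).
Local Notation E' := (Emx x0 x1 x2 x3 x4 x5 y0 y1 y2 y3 y4 y5).
Local Notation gx := (grp_size x0 x1 x2 x3 x4 x5).
Local Notation gy := (grp_size y0 y1 y2 y3 y4 y5).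

Lemma trmx_Emx : E^T = E'.
Proof. by apply/matrixP => j i; rewrite !mxE sgn_tabC ?blk_lt6. Qed.

Lemma forced_tr (A : 'M[int]_(X, Y)) :
  forced x0 x1 x2 x3 x4 x5 y0 y1 y2 y3 y4 y5 A ->
  forced y0 y1 y2 y3 y4 y5 x0 x1 x2 x3 x4 x5 A^T.
Proof. by move=> A_forced j i; rewrite mxE sgn_tabC ?blk_lt6 //; exact: A_forced. Qed.

Lemma row_weight_tr (A : 'M[int]_(X, Y)) (j : 'I_Y) :
  row_weight y0 y1 y2 y3 y4 y5 x0 x1 x2 x3 x4 x5 A^T j =
  \sum_(i : 'I_X | sgn_tab (rk i) (ck j) == 0) twisted x0 x1 x2 x3 x4 x5 y0 y1 y2 y3 y4 y5 A i j.
Proof.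
rewrite /row_weight; apply: eq_big => [i|i _]; first by rewrite sgn_tabC ?blk_lt6.
by rewrite /twisted mxE eq_sym.
Qed.

Lemma tr_gram (A : 'M[int]_(X, Y)) :
  (A^T + E') *m (A^T + E')^T = A^T *m A^T^T <-> (A + E)^T *m (A + E) = A^T *m A.
Proof. by rewrite -trmx_Emx -linearD /= !trmxK. Qed.

Lemma balanced_sizes_of_col_sums : (const_mx 1 : 'rV[int]_X) *m E = 0 ->
  (forall g, (g < 3)%N -> (0 < gy g)%N) -> balanced_sizes x0 x1 x2 x3 x4 x5.
Proof.
move=> col_sums; apply: balanced_sizes_of_row_sums.
by rewrite -trmx_Emx -(trmx_const 1) -trmx_mul col_sums trmx0.
Qed.

Lemma sum_row_weight_grp (A : 'M[int]_(X, Y)) g : (g < 3)%N ->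
  \sum_(i : 'I_X | (rk i)./2 == g) row_weight x0 x1 x2 x3 x4 x5 y0 y1 y2 y3 y4 y5 A i =
  \sum_(j : 'I_Y | (ck j)./2 == (2 - g)%N) row_weight y0 y1 y2 y3 y4 y5 x0 x1 x2 x3 x4 x5 A^T j.
Proof.
move=> g_lt3.
transitivity (\sum_(i : 'I_X | (rk i)./2 == g) \sum_(j : 'I_Y | (ck j)./2 == (2 - g)%N)
                twisted x0 x1 x2 x3 x4 x5 y0 y1 y2 y3 y4 y5 A i j).
  apply: eq_bigr => i /eqP grp_i; apply: eq_bigl => j.
  by rewrite sgn_tab_eq0 ?blk_lt6 // grp_i.
rewrite exchange_big; apply: eq_bigr => j /eqP grp_j; rewrite row_weight_tr.
apply: eq_bigl => i; rewrite sgn_tab_eq0 ?blk_lt6 // grp_j.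
by have := blk_half_lt3 i; lia.
Qed.

Lemma balanced_of_realizable :
  balanced_sizes x0 x1 x2 x3 x4 x5 -> balanced_sizes y0 y1 y2 y3 y4 y5 ->
  (forall g, (g < 3)%N -> (0 < gx g)%N) -> (forall g, (g < 3)%N -> (0 < gy g)%N) ->
  realizable E ->
  exists a b : int, [/\ exists u : int, a = 2 * u - (y4 + y5)%:Z,
                        exists v : int, b = 2 * v - (x4 + x5)%:Z,
                        (x0 + x1)%:Z * a = (y4 + y5)%:Z * b,
                        (x2 + x3)%:Z * a = (y2 + y3)%:Z * b
                      & (x4 + x5)%:Z * a = (y0 + y1)%:Z * b].
Proof.
move=> x_bal y_bal x_nonempty y_nonempty [A [A01 AE01 row_gram col_gram _]].
have A_forced := forced_of_01 A01 AE01.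
have [a bal_a] := (row_gram_balanced A_forced y_bal x_nonempty).1 (esym row_gram).
have [b bal_b] := (row_gram_balanced (forced_tr A A_forced) x_bal y_nonempty).1
                    ((tr_gram A).2 (esym col_gram)).
have grp_eq g : (g < 3)%N -> (gx g)%:Z * a = (gy (2 - g))%:Z * b.
  move=> g_lt3; have g'_lt3 : (2 - g < 3)%N by lia.
  have := congr1 (fun w => 2 * w) (sum_row_weight_grp A g g_lt3).
  rewrite /= (sum_grp_row_weight g_lt3 bal_a) (sum_grp_row_weight g'_lt3 bal_b).
  rewrite grp_signC // subKn; last by lia.
  by case: g g_lt3 {g'_lt3} => [|[|[|]]] //= _; rewrite /grp_sign /=; nia.
have [i0 /eqP grp_i0] := exists_in_grp 0%N isT (x_nonempty 0%N isT).
have [j0 /eqP grp_j0] := exists_in_grp 0%N isT (y_nonempty 0%N isT).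
exists a, b; split;
  [| | exact: (grp_eq 0%N isT) | exact: (grp_eq 1%N isT) | exact: (grp_eq 2%N isT)].
- exists (row_weight x0 x1 x2 x3 x4 x5 y0 y1 y2 y3 y4 y5 A i0).
  by have := balance_double_weight (bal_a i0); rewrite grp_i0 subn0 /grp_sign /=; lia.
- exists (row_weight y0 y1 y2 y3 y4 y5 x0 x1 x2 x3 x4 x5 A^T j0).
  by have := balance_double_weight (bal_b j0); rewrite grp_j0 subn0 /grp_sign /=; lia.
Qed.

End Transpose.

Arguments forced_tr {x0 x1 x2 x3 x4 x5 y0 y1 y2 y3 y4 y5 A}.

Section Construction.
Variables x0 x1 x2 x3 x4 x5 y0 y1 y2 y3 y4 y5 : nat.
Local Notation X := (x0 + x1 + x2 + x3 + x4 + x5)%N.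
Local Notation Y := (y0 + y1 + y2 + y3 + y4 + y5)%N.
Local Notation rk := (blk x0 x1 x2 x3 x4 x5).
Local Notation ck := (blk y0 y1 y2 y3 y4 y5).
Local Notation E := (Emx y0 y1 y2 y3 y4 y5 x0 x1 x2 x3 x4 x5).
Local Notation gx := (grp_size x0 x1 x2 x3 x4 x5).
Local Notation gy := (grp_size y0 y1 y2 y3 y4 y5).
Variables period ones : nat -> nat.

Definition periodic_pattern (i : 'I_X) (j : 'I_Y) : int :=
  if (((i - grp_start x0 x1 x2 x3 (rk i)./2) + (j - grp_start y0 y1 y2 y3 (ck j)./2))
       %% period (rk i)./2 < ones (rk i)./2)%N then 1 else 0.

Definition periodic_mx : 'M[int]_(X, Y) :=
  \matrix_(i, j) if sgn_tab (rk i) (ck j) == 0 then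
                   (if odd (rk i) == odd (ck j) then periodic_pattern i j
                    else 1 - periodic_pattern i j)
                 else if sgn_tab (rk i) (ck j) == -1 then 1 else 0.

Lemma periodic_mx_forced : forced x0 x1 x2 x3 x4 x5 y0 y1 y2 y3 y4 y5 periodic_mx.
Proof. by move=> i j sgn_ij; rewrite mxE (negbTE sgn_ij). Qed.

Lemma twisted_periodic_mx (i : 'I_X) (j : 'I_Y) : sgn_tab (rk i) (ck j) == 0 ->
  twisted x0 x1 x2 x3 x4 x5 y0 y1 y2 y3 y4 y5 periodic_mx i j = periodic_pattern i j.
Proof. by move=> sgn_ij; rewrite /twisted mxE sgn_ij; case: (odd _ == odd _) => //; ring. Qed.

Hypothesis period_gt0 : forall g, (g < 3)%N -> (0 < period g)%N.
Hypothesis ones_le_period : forall g, (g < 3)%N -> (ones g <= period g)%N.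
Hypothesis period_dvd_x : forall g, (g < 3)%N -> (period g %| gx g)%N.
Hypothesis period_dvd_y : forall g, (g < 3)%N -> (period g %| gy (2 - g))%N.

Lemma row_weight_periodic_mx (i : 'I_X) :
  row_weight x0 x1 x2 x3 x4 x5 y0 y1 y2 y3 y4 y5 periodic_mx i =
  (gy (2 - (rk i)./2) %/ period (rk i)./2 * ones (rk i)./2)%:Z.
Proof.
have g_lt3 := blk_half_lt3 i.
rewrite /row_weight (eq_bigr (periodic_pattern i)); last by move=> j; exact: twisted_periodic_mx.
rewrite (eq_bigl (fun j : 'I_Y => (ck j)./2 == (2 - (rk i)./2)%N)); last first.
  by move=> j; rewrite sgn_tab_eq0 ?blk_lt6.
rewrite -(@sum_grp_periodic y0 y1 y2 y3 y4 y5 _ _ _ (i - grp_start x0 x1 x2 x3 (rk i)./2)%N);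
  try by [|lia|auto].
by apply: eq_bigr => j /eqP grp_j; rewrite /periodic_pattern grp_j.
Qed.

Lemma row_weight_tr_periodic_mx (j : 'I_Y) :
  row_weight y0 y1 y2 y3 y4 y5 x0 x1 x2 x3 x4 x5 periodic_mx^T j =
  (gx (2 - (ck j)./2) %/ period (2 - (ck j)./2) * ones (2 - (ck j)./2))%:Z.
Proof.
have g_lt3 : (2 - (ck j)./2 < 3)%N by lia.
rewrite row_weight_tr (eq_bigr (periodic_pattern ^~ j)); last first.
  by move=> i; exact: twisted_periodic_mx.
rewrite (eq_bigl (fun i : 'I_X => (rk i)./2 == (2 - (ck j)./2)%N)); last first.
  move=> i; rewrite sgn_tab_eq0 ?blk_lt6 //.
  by have := blk_half_lt3 i; have := blk_half_lt3 j; lia.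
rewrite -(@sum_grp_periodic x0 x1 x2 x3 x4 x5 _ _ _ (j - grp_start y0 y1 y2 y3 (ck j)./2)%N);
  try by [|lia|auto].
by apply: eq_bigr => i /eqP grp_i; rewrite /periodic_pattern grp_i addnC.
Qed.

Lemma realizable_of_periodic (a b : int) :
  balanced_sizes x0 x1 x2 x3 x4 x5 -> balanced_sizes y0 y1 y2 y3 y4 y5 ->
  (forall g, (g < 3)%N -> (0 < gx g)%N) -> (forall g, (g < 3)%N -> (0 < gy g)%N) ->
  (forall g, (g < 3)%N ->
     grp_sign g * (2 * (gy (2 - g) %/ period g * ones g)%:Z - (gy (2 - g))%:Z) = a) ->
  (forall g, (g < 3)%N -> grp_sign g * (2 * (gx g %/ period g * ones g)%:Z - (gx g)%:Z) = b) ->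
  realizable E.
Proof.
move=> x_bal y_bal x_nonempty y_nonempty bal_a bal_b.
have A_forced := periodic_mx_forced.
exists periodic_mx; split.
- by move=> i j; rewrite mxE /periodic_pattern; repeat case: ifP => ?; lia.
- move=> i j; rewrite !mxE /periodic_pattern.
  by case: (sgn_tab_vals (rk i) (ck j)) => -> /=; repeat case: ifP => ?; lia.
- apply/esym/(row_gram_balanced A_forced y_bal x_nonempty); exists a => i.
  by rewrite row_weight_periodic_mx /balance; apply/bal_a/blk_half_lt3.
- apply/esym/tr_gram/(row_gram_balanced (forced_tr A_forced) x_bal y_nonempty).
  exists b => j; rewrite row_weight_tr_periodic_mx /balance.
  by rewrite -(grp_signC _ (blk_half_lt3 j)); apply: bal_b; lia.
- have [i0 /eqP grp_i0] := exists_in_grp 0%N isT (x_nonempty 0%N isT).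
  have [j0 /eqP grp_j0] := exists_in_grp 0%N isT (y_nonempty 0%N isT).
  move=> /(congr1 (fun M : 'M[int]_(X, Y) => M i0 j0)).
  rewrite [X in _ = X]mxE -[X in X = _]addr0 => /addrI /esym /eqP.
  by rewrite mxE sgn_tab_eq0 ?blk_lt6 // grp_i0 grp_j0.
Qed.

End Construction.

Lemma mulr_cross_eq {R : idomainType} {x y z w a b : R} : b != 0 ->
  x * a = y * b -> z * a = w * b -> x * w = z * y.
Proof.
move=> b_neq0 xy zw; apply: (mulIf b_neq0).
by rewrite -mulrA -zw -mulrA -xy mulrCA.
Qed.

Lemma eq_ratio_nat (m n p q : nat) : (0 < n)%N -> (0 < q)%N ->
  (m%:R / n%:R = p%:R / q%:R :> rat) <-> (m * q = p * n)%N.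
Proof.
move=> n_gt0 q_gt0; rewrite (rwP eqP) eqr_div ?pnatr_eq0 -?lt0n // -!natrM eqr_nat.
by split=> /eqP.
Qed.

Lemma divn_gcd_eq_of_cross {m n p q : nat} : (0 < m)%N -> (0 < p)%N ->
  (m * q = p * n)%N ->
  (m %/ gcdn m n = p %/ gcdn p q)%N /\ (n %/ gcdn m n = q %/ gcdn p q)%N.
Proof.
move=> m_gt0 p_gt0 mq_pn.
have gmn_gt0 : (0 < gcdn m n)%N by rewrite gcdn_gt0 m_gt0.
have gpq_gt0 : (0 < gcdn p q)%N by rewrite gcdn_gt0 p_gt0.
have gg_gt0 : (0 < gcdn m n * gcdn p q)%N by rewrite muln_gt0 gmn_gt0.
have m_g : (m * gcdn p q = p * gcdn m n)%N.
  by rewrite !muln_gcdr mq_pn [(m * p)%N]mulnC.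
have n_g : (n * gcdn p q = q * gcdn m n)%N.
  by rewrite !muln_gcdr [(n * p)%N]mulnC -mq_pn [(m * q)%N]mulnC [(n * q)%N]mulnC.
split; apply/eqP; rewrite -(eqn_pmul2r gg_gt0) mulnA divnK ?dvdn_gcdl ?dvdn_gcdr //.
- by rewrite m_g [(_ * gcdn p q)%N]mulnC mulnA divnK ?dvdn_gcdl.
- by rewrite n_g [(_ * gcdn p q)%N]mulnC mulnA divnK ?dvdn_gcdr.
Qed.

Definition odd_ones (g n : nat) : nat := if g == 1%N then n./2 else n.+1./2.

Lemma odd_ones_le g n : (odd_ones g n <= n)%N.
Proof. by rewrite /odd_ones; case: ifP => _; lia. Qed.

Lemma balance_odd_ones g m n : odd n -> (n %| m)%N ->
  grp_sign g * (2 * (m %/ n * odd_ones g n)%:Z - m%:Z) = (m %/ n)%:Z.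
Proof.
move=> n_odd /divnK; move: (m %/ n)%N => k <-.
have n_eq : (n = 2 * n./2 + 1)%N by lia.
have up_eq : (n.+1./2 = n./2 + 1)%N by lia.
rewrite /odd_ones /grp_sign up_eq; move: n./2 n_eq => h ->; case: ifP => _; lia.
Qed.

Arguments balanced_sizes_of_row_sums {x0 x1 x2 x3 x4 x5 y0 y1 y2 y3 y4 y5}.
Arguments balanced_sizes_of_col_sums {x0 x1 x2 x3 x4 x5 y0 y1 y2 y3 y4 y5}.
Arguments balanced_of_realizable {x0 x1 x2 x3 x4 x5 y0 y1 y2 y3 y4 y5}.

Section Characterization.
Variables x0 x1 x2 x3 x4 x5 y0 y1 y2 y3 y4 y5 : nat.
Local Notation E := (Emx y0 y1 y2 y3 y4 y5 x0 x1 x2 x3 x4 x5).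
Local Notation gx := (grp_size x0 x1 x2 x3 x4 x5).
Local Notation gy := (grp_size y0 y1 y2 y3 y4 y5).

Lemma realizability_condition_of_balanced (a b u v : int) :
  (0 < x0 + x1)%N -> (0 < x2 + x3)%N -> (0 < x4 + x5)%N ->
  balanced_sizes x0 x1 x2 x3 x4 x5 -> balanced_sizes y0 y1 y2 y3 y4 y5 ->
  a = 2 * u - (y4 + y5)%:Z -> b = 2 * v - (x4 + x5)%:Z ->
  (x0 + x1)%:Z * a = (y4 + y5)%:Z * b -> (x2 + x3)%:Z * a = (y2 + y3)%:Z * b ->
  (x4 + x5)%:Z * a = (y0 + y1)%:Z * b ->
  [&& ~~ odd (y0 + y1), ~~ odd (y2 + y3), ~~ odd (y4 + y5),
      ~~ odd (x0 + x1), ~~ odd (x2 + x3) & ~~ odd (x4 + x5)]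
  \/
  (([&& odd (y0 + y1), odd (y2 + y3) & odd (y4 + y5)] \/
    [&& odd (x0 + x1), odd (x2 + x3) & odd (x4 + x5)]) /\
   ((y4 + y5)%:R / (x0 + x1)%:R = (y2 + y3)%:R / (x2 + x3)%:R :> rat) /\
   ((y2 + y3)%:R / (x2 + x3)%:R = (y0 + y1)%:R / (x4 + x5)%:R :> rat)).
Proof.
move=> x01_gt0 x23_gt0 x45_gt0 [xb1 xb2] [yb1 yb2] a_eq b_eq e0 e1 e2.
have [some_odd|] := boolP (odd (y0 + y1) || odd (x0 + x1)); last by left; lia.
right; split; first by lia.
have b_neq0 : b != 0.
  by apply/eqP => b0; move: e0; rewrite b0 mulr0 => /eqP; rewrite mulf_eq0; lia.
rewrite !eq_ratio_nat //; split.
- by have := mulr_cross_eq b_neq0 e0 e1; nia.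
- by have := mulr_cross_eq b_neq0 e1 e2; nia.
Qed.

Lemma realizable_of_even :
  balanced_sizes x0 x1 x2 x3 x4 x5 -> balanced_sizes y0 y1 y2 y3 y4 y5 ->
  (forall g, (g < 3)%N -> (0 < gx g)%N) -> (forall g, (g < 3)%N -> (0 < gy g)%N) ->
  [&& ~~ odd (y0 + y1), ~~ odd (y2 + y3), ~~ odd (y4 + y5),
      ~~ odd (x0 + x1), ~~ odd (x2 + x3) & ~~ odd (x4 + x5)] ->
  realizable E.
Proof.
move=> x_bal y_bal x_nonempty y_nonempty /and4P[ey0 ey1 ey2 /and3P[ex0 ex1 ex2]].
apply: (@realizable_of_periodic x0 x1 x2 x3 x4 x5 y0 y1 y2 y3 y4 y5 (fun=> 2%N) (fun=> 1%N)
          _ _ _ _ 0 0) => //;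
  case=> [|[|[|]]] //= _; rewrite ?subSS ?subn0 ?dvdn2 /grp_sign /=; lia.
Qed.

Lemma realizable_of_odd_ratio :
  balanced_sizes x0 x1 x2 x3 x4 x5 -> balanced_sizes y0 y1 y2 y3 y4 y5 ->
  (forall g, (g < 3)%N -> (0 < gx g)%N) -> (forall g, (g < 3)%N -> (0 < gy g)%N) ->
  [&& odd (y0 + y1), odd (y2 + y3) & odd (y4 + y5)] \/
    [&& odd (x0 + x1), odd (x2 + x3) & odd (x4 + x5)] ->
  (y4 + y5)%:R / (x0 + x1)%:R = (y2 + y3)%:R / (x2 + x3)%:R :> rat ->
  (y2 + y3)%:R / (x2 + x3)%:R = (y0 + y1)%:R / (x4 + x5)%:R :> rat ->
  realizable E.
Proof.
move=> x_bal y_bal x_nonempty y_nonempty some_odd.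
rewrite !eq_ratio_nat ?(x_nonempty 0%N) ?(x_nonempty 1%N) ?(x_nonempty 2%N) //.
move=> cross1 cross2.
have [num1 den1] := divn_gcd_eq_of_cross (y_nonempty 2%N isT) (y_nonempty 1%N isT) cross1.
have [num2 den2] := divn_gcd_eq_of_cross (y_nonempty 1%N isT) (y_nonempty 0%N isT) cross2.
pose G g := gcdn (gy (2 - g)) (gx g).
have G_odd g : (g < 3)%N -> odd (G g).
  move=> g_lt3; case: some_odd => /and3P[odd0 odd1 odd2].
  - by apply: (dvdn_odd (dvdn_gcdl _ _)); case: g g_lt3 => [|[|[|]]].
  - by apply: (dvdn_odd (dvdn_gcdr _ _)); case: g g_lt3 => [|[|[|]]].
apply: (@realizable_of_periodic x0 x1 x2 x3 x4 x5 y0 y1 y2 y3 y4 y5 G (fun g => odd_ones g (G g))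
          _ _ _ _ (gy 2 %/ G 0%N)%:Z (gx 0 %/ G 0%N)%:Z) => // g g_lt3 /=.
- by rewrite gcdn_gt0 x_nonempty ?orbT.
- exact: odd_ones_le.
- exact: dvdn_gcdr.
- exact: dvdn_gcdl.
- rewrite balance_odd_ones ?G_odd ?dvdn_gcdl //; congr Posz.
  by case: g g_lt3 => [|[|[|]]] // _; exact: esym (etrans num1 num2).
- rewrite balance_odd_ones ?G_odd ?dvdn_gcdr //; congr Posz.
  by case: g g_lt3 => [|[|[|]]] // _; exact: esym (etrans den1 den2).
Qed.

End Characterization.

Theorem theorem4p35 (a b c d e f k l p q r s : nat) :
  (0 < a + b)%N -> (0 < c + d)%N -> (0 < e + f)%N ->
  (0 < k + l)%N -> (0 < p + q)%N -> (0 < r + s)%N ->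
  Emx a b c d e f k l p q r s *m (const_mx 1 : 'cV[int]_(a + b + c + d + e + f)) = 0 ->
  (const_mx 1 : 'rV[int]_(k + l + p + q + r + s)) *m Emx a b c d e f k l p q r s = 0 ->
  (realizable (Emx a b c d e f k l p q r s) <->
   ([&& ~~ odd (a + b), ~~ odd (c + d), ~~ odd (e + f),
        ~~ odd (k + l), ~~ odd (p + q) & ~~ odd (r + s)]
    \/
    (([&& odd (a + b), odd (c + d) & odd (e + f)] \/
      [&& odd (k + l), odd (p + q) & odd (r + s)]) /\
     ((e + f)%:R / (k + l)%:R = (c + d)%:R / (p + q)%:R :> rat) /\
     ((c + d)%:R / (p + q)%:R = (a + b)%:R / (r + s)%:R :> rat)))).
Proof.
move=> ab_gt0 cd_gt0 ef_gt0 kl_gt0 pq_gt0 rs_gt0 row_sums col_sums.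
have x_nonempty : forall g, (g < 3)%N -> (0 < grp_size k l p q r s g)%N by case=> [|[|[|]]].
have y_nonempty : forall g, (g < 3)%N -> (0 < grp_size a b c d e f g)%N by case=> [|[|[|]]].
have y_bal := balanced_sizes_of_row_sums row_sums x_nonempty.
have x_bal := balanced_sizes_of_col_sums col_sums y_nonempty.
split=> [|[all_even|[some_odd [ratio1 ratio2]]]].
- case/(balanced_of_realizable x_bal y_bal x_nonempty y_nonempty) => wa [wb [[u a_eq] [v b_eq]]].
  exact: realizability_condition_of_balanced a_eq b_eq.
- exact: realizable_of_even.
- exact: realizable_of_odd_ratio.
Qed.
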